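(* Let $\psi:(\mathcal A,\jmath)_K\to(\mathcal B,\imath)_K$ be a monomorphism of nets of $\mathrm{C}^*$-algebras over the poset $K$ (each $\psi_o:\mathcal A_o\to\mathcal B_o$ an injective ${}^*$-morphism with $\psi_o\circ\jmath_{oa}=\imath_{oa}\circ\psi_a$). Then the domain of the Čech cocycle of $(\mathcal B,\imath)_K$ is contained in the domain of the Čech cocycle of $(\mathcal A,\jmath)_K$; that is, whenever $(F;\tilde o,o)$ is a $1$-simplex for which there is a ${}^*$-isomorphism $\xi:\mathcal B^F_o\to\mathcal B^F_{\tilde o}$ with $\xi\circ\imath_{oa}=\imath_{\tilde oa}$ for all $a\in F$, there is a ${}^*$-isomorphism $\zeta:\mathcal A^F_o\to\mathcal A^F_{\tilde o}$ with $\zeta\circ\jmath_{oa}=\jmath_{\tilde oa}$ for all $a\in F$.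
   Context: A net of $\mathrm{C}^*$-algebras $(\mathcal A,\jmath)_K$ over a poset $K$: unital $\mathrm{C}^*$-algebras $\mathcal A_o$ and unital injective ${}^*$-morphisms $\jmath_{oa}:\mathcal A_a\to\mathcal A_o$ ($a\le o$) with $\jmath_{oa}\circ\jmath_{ae}=\jmath_{oe}$. For nonempty $F,S\subseteq K$, $F\le S$ means every element of $F$ is $\le$ every element of $S$. $\Sigma^\circ_*(K)$ is the simplicial set whose $n$-simplices are strings $(F;o_{n+1},\dots,o_1)$ with $o_i\in K$ and $F$ a nonempty subset of $K$ with $F\le\{o_{n+1},\dots,o_1\}$. For $(F;o)$, $\mathcal A^F_o$ is the $\mathrm{C}^*$-subalgebra of $\mathcal A_o$ generated by the $\jmath_{oa}(\mathcal A_a)$, $a\in F$. The Čech cocycle is defined on the $1$-simplex $(F;\tilde o,o)$ if there is a ${}^*$-isomorphism $\zeta^F_{\tilde oo}:\mathcal A^F_o\to\mathcal A^F_{\tilde o}$ with $\zeta^F_{\tilde oo}\circ\jmath_{oa}=\jmath_{\tilde oa}$ for all $a\in F$ (necessarily unique); the domain of the Čech cocycle is the largest symmetric subsimplicial set of $\Sigma^\circ_*(K)$ on whose $1$-simplices it is defined. *)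

From mathcomp Require Import all_boot all_order all_algebra.
From mathcomp Require Import complex reals.
Set Implicit Arguments. Unset Strict Implicit. Unset Printing Implicit Defensive.
Import Order.TTheory GRing.Theory Num.Theory.
Local Open Scope ring_scope.

Definition cabs (R : realType) (c : R[i]) : R :=
  Num.sqrt (complex.Re c ^+ 2 + complex.Im c ^+ 2).

Record cstar_algebra (R : realType) := CStarAlgebra {
  cs_car :> algType R[i];
  cs_star : cs_car -> cs_car;
  cs_norm : cs_car -> R;
  cs_starD : forall x y, cs_star (x + y) = cs_star x + cs_star y;
  cs_starZ : forall (c : R[i]) x, cs_star (c *: x) = (Num.conj c) *: cs_star x;
  cs_starM : forall x y, cs_star (x * y) = cs_star y * cs_star x;
  cs_starK : forall x, cs_star (cs_star x) = x;
  cs_norm_eq0 : forall x, cs_norm x = 0 -> x = 0;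
  cs_normD : forall x y, cs_norm (x + y) <= cs_norm x + cs_norm y;
  cs_normZ : forall (c : R[i]) x, cs_norm (c *: x) = cabs c * cs_norm x;
  cs_normM : forall x y, cs_norm (x * y) <= cs_norm x * cs_norm y;
  cs_cstar : forall x, cs_norm (cs_star x * x) = cs_norm x ^+ 2;
  cs_complete : forall u : nat -> cs_car,
    (forall e : R, 0 < e -> exists N, forall m n, (N <= m)%N -> (N <= n)%N ->
        cs_norm (u m - u n) < e) ->
    exists l, forall e : R, 0 < e -> exists N, forall n, (N <= n)%N ->
        cs_norm (u n - l) < e
}.

Section Defs.
Variable R : realType.

Definition cs_cvg (A : cstar_algebra R) (u : nat -> A) (l : A) : Prop :=
  forall e : R, 0 < e -> exists N, forall n, (N <= n)%N -> cs_norm (u n - l) < e.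

Definition is_cstar_subalg (A : cstar_algebra R) (S : A -> Prop) : Prop :=
  [/\ S 1,
      forall x y, S x -> S y -> S (x + y),
      forall (c : R[i]) x, S x -> S (c *: x),
      forall x y, S x -> S y -> S (x * y)
    & (forall x, S x -> S (cs_star x)) /\
      (forall u l, (forall n, S (u n)) -> cs_cvg u l -> S l)].

Definition cstar_gen (A : cstar_algebra R) (X : A -> Prop) : A -> Prop :=
  fun x => forall S, is_cstar_subalg S -> (forall y, X y -> S y) -> S x.

Definition star_morph (A B : cstar_algebra R) (f : A -> B) : Prop :=
  [/\ forall x y, f (x + y) = f x + f y,
      forall (c : R[i]) x, f (c *: x) = c *: f x,
      forall x y, f (x * y) = f x * f y,
      forall x, f (cs_star x) = cs_star (f x)
    & f 1 = 1].

Definition star_iso_on (A B : cstar_algebra R) (S : A -> Prop) (T : B -> Prop)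
    (f : A -> B) : Prop :=
  [/\ forall x y, S x -> S y -> f (x + y) = f x + f y,
      forall (c : R[i]) x, S x -> f (c *: x) = c *: f x,
      forall x y, S x -> S y -> f (x * y) = f x * f y,
      forall x, S x -> f (cs_star x) = cs_star (f x)
    & [/\ forall x, S x -> T (f x),
      forall x y, S x -> S y -> f x = f y -> x = y
    & forall z, T z -> exists2 x, S x & f x = z]].

(** A net of C*-algebras over the poset K : the maps j a o are only
    relevant for a <= o (j is total only for convenience). *)
Definition is_net (d : Order.disp_t) (K : porderType d)
    (A : K -> cstar_algebra R) (j : forall a o : K, A a -> A o) : Prop :=
  (forall a o : K, (a <= o)%O -> star_morph (j a o) /\ injective (j a o)) /\
  (forall e a o : K, (e <= a)%O -> (a <= o)%O ->
     forall x, j a o (j e a x) = j e o x).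

Definition net_mono (d : Order.disp_t) (K : porderType d)
    (A B : K -> cstar_algebra R) (j : forall a o : K, A a -> A o)
    (i : forall a o : K, B a -> B o) (psi : forall o : K, A o -> B o) : Prop :=
  (forall o : K, star_morph (psi o) /\ injective (psi o)) /\
  (forall a o : K, (a <= o)%O -> forall x, psi o (j a o x) = i a o (psi a x)).

Definition loc_alg (d : Order.disp_t) (K : porderType d)
    (A : K -> cstar_algebra R) (j : forall a o : K, A a -> A o)
    (F : K -> Prop) (o : K) : A o -> Prop :=
  cstar_gen (fun y => exists a, exists2 x, F a & y = j a o x).

(** the Čech cocycle of (A, j) is defined on the 1-simplex (F; ot, o) *)
Definition cech_defined (d : Order.disp_t) (K : porderType d)
    (A : K -> cstar_algebra R) (j : forall a o : K, A a -> A o)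
    (F : K -> Prop) (ot o : K) : Prop :=
  exists zeta : A o -> A ot,
    star_iso_on (@loc_alg d K A j F o) (@loc_alg d K A j F ot) zeta /\
    forall a, F a -> forall x, zeta (j a o x) = j a ot x.

End Defs.

From mathcomp Require Import all_boot all_order all_algebra.
From mathcomp Require Import complex reals classical_sets ring lra.
From Stdlib Require Import ClassicalEpsilon.

(* Injective *-morphisms of C*-algebras are isometric, so [xi \o psi_o] (on A^F_o) and
   [psi_ot] (on A^F_ot) are isometric *-morphisms into B_ot which agree on generators:
   [xi (psi_o (j_oa x)) = psi_ot (j_ota x)].  The elements of A^F_o whose image under
   [xi \o psi_o] lies in [psi_ot (A^F_ot)] form a C*-subalgebra (limits lift, since a
   lifted sequence is Cauchy along an isometry) containing the generators, and
   symmetrically; hence [zeta := psi_ot^-1 \o xi \o psi_o] is the required isomorphism.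
   Contractivity and isometry of *-morphisms are derived from the C*-identity alone:
   a self-adjoint [x] with [‖x‖ <= 1] has a self-adjoint [k] commuting with it with
   [x^2 + k^2 = 1], namely [k = 1 - Y] for the solution [Y] of [2 Y = (1 - x^2) + Y^2]
   obtained by Picard iteration. *)

Set Implicit Arguments. Unset Strict Implicit. Unset Printing Implicit Defensive.
Import Order.TTheory GRing.Theory Num.Theory.
Local Open Scope ring_scope.
Local Open Scope complex_scope.

Local Notation half := ((2^-1 : _)%:C).

Definition selfadjoint (R : realType) (A : cstar_algebra R) (x : A) := cs_star x = x.

Definition cs_cauchy (R : realType) (A : cstar_algebra R) (u : nat -> A) :=
  forall e : R, 0 < e -> exists N, forall m n, (N <= m)%N -> (N <= n)%N -> cs_norm (u m - u n) < e.

Section CStarBasics.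
Variables (R : realType) (A : cstar_algebra R).
Implicit Types (x y z : A) (r : R).

Lemma cs_normRZ r x : cs_norm (r%:C *: x) = `|r| * cs_norm x.
Proof. by rewrite cs_normZ /cabs /= expr0n /= addr0 sqrtr_sqr. Qed.

Lemma scale_half_add x : half *: x + half *: x = x.
Proof.
rewrite -scalerDl (_ : _ + _ = 1) ?scale1r //.
by apply/eqP; rewrite eq_complex /= addr0 eqxx andbT; apply/eqP; field.
Qed.

Lemma cs_norm_normalize x : 0 < cs_norm x -> cs_norm ((cs_norm x)^-1%:C *: x) = 1.
Proof. by move=> x_gt0; rewrite cs_normRZ gtr0_norm ?invr_gt0 // mulVf // gt_eqF. Qed.

Lemma scaleN1C x : (-1 : R)%:C *: x = - x.
Proof. by rewrite -scaleN1r; congr (_ *: _); simpc. Qed.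

Lemma cs_norm0 : cs_norm (0 : A) = 0.
Proof. by have := cs_normRZ 0 (0 : A); rewrite scaler0 normr0 mul0r. Qed.

Lemma cs_normN x : cs_norm (- x) = cs_norm x.
Proof. by rewrite -scaleN1C cs_normRZ normrN normr1 mul1r. Qed.

Lemma cs_norm_ge0 x : 0 <= cs_norm x.
Proof. by have := cs_normD x (- x); rewrite subrr cs_norm0 cs_normN; lra. Qed.

Lemma cs_distC x y : cs_norm (x - y) = cs_norm (y - x).
Proof. by rewrite -cs_normN opprB. Qed.

Lemma cs_dist_triangle x y z : cs_norm (x - z) <= cs_norm (x - y) + cs_norm (y - z).
Proof. by apply: le_trans (cs_normD _ _); rewrite addrA subrK. Qed.

Lemma cs_norm_le0 x : cs_norm x <= 0 -> x = 0.
Proof. by move=> x_le0; apply: cs_norm_eq0; apply/eqP; rewrite eq_le x_le0 cs_norm_ge0. Qed.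

Lemma cs_starRZ r x : cs_star (r%:C *: x) = r%:C *: cs_star x.
Proof. by rewrite cs_starZ /Num.conj /=; simpc. Qed.

Lemma cs_star0 : cs_star (0 : A) = 0.
Proof. by rewrite -(scale0r (0 : A)) cs_starZ conjC0 !scale0r. Qed.

Lemma cs_starN x : cs_star (- x) = - cs_star x.
Proof. by rewrite -!scaleN1C cs_starRZ. Qed.

Lemma cs_starB x y : cs_star (x - y) = cs_star x - cs_star y.
Proof. by rewrite cs_starD cs_starN. Qed.

Lemma cs_star1 : cs_star (1 : A) = 1.
Proof. by rewrite -[LHS]mulr1 -[X in _ * X](cs_starK 1) -cs_starM mulr1 cs_starK. Qed.

Lemma cs_norm_star x : cs_norm (cs_star x) = cs_norm x.
Proof.
suff le_star y : cs_norm y <= cs_norm (cs_star y).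
  by apply/eqP; rewrite eq_le le_star -{2}(cs_starK x) le_star.
have := cs_normM (cs_star y) y; rewrite cs_cstar expr2.
by have := cs_norm_ge0 y; have := cs_norm_ge0 (cs_star y); nra.
Qed.

Lemma cs_norm1 : cs_norm (1 : A) <= 1.
Proof.
by have := cs_cstar (1 : A); rewrite cs_star1 mulr1 expr2; have := cs_norm_ge0 1; nra.
Qed.

Lemma cs_norm_sa_sqr x : selfadjoint x -> cs_norm (x * x) = cs_norm x ^+ 2.
Proof. by move=> sa_x; rewrite -{1}sa_x cs_cstar. Qed.

End CStarBasics.

Section Convergence.
Variables (R : realType) (A : cstar_algebra R).
Implicit Types (u : nat -> A) (a : A).

Lemma cs_cvg_shift u a : cs_cvg u a -> cs_cvg (fun n => u n.+1) a.
Proof. by move=> cv e /cv[N Nu]; exists N => n /leqW; apply: Nu. Qed.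

Lemma cs_cvg_cauchy u a : cs_cvg u a -> cs_cauchy u.
Proof.
move=> cv e e_gt0; have [N Nu] := cv _ (divr_gt0 e_gt0 (ltr0Sn _ 1)).
exists N => m n /Nu um /Nu un; apply: le_lt_trans (cs_dist_triangle (u m) a (u n)) _.
by move: um un; rewrite (cs_distC a); lra.
Qed.

Lemma ler_cs_cvg (B : cstar_algebra R) u (v : nat -> B) a b (x m C : R) :
  cs_cvg u a -> cs_cvg v b ->
  (forall n, x <= m + C * (cs_norm (u n - a) + cs_norm (v n - b))) -> x <= m.
Proof.
move=> cu cv x_le; have [//|m_lt_x] := leP x m.
pose e := (x - m) / (2 * (`|C| + 1)).
have e_gt0 : 0 < e by apply: divr_gt0; rewrite ?subr_gt0 //; have := normr_ge0 C; lra.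
have [N1 N1u] := cu _ e_gt0; have [N2 N2v] := cv _ e_gt0.
have := x_le (maxn N1 N2); have := N1u _ (leq_maxl N1 N2); have := N2v _ (leq_maxr N1 N2).
have eE : e * (2 * (`|C| + 1)) = x - m by rewrite /e mulfVK //; have := normr_ge0 C; lra.
have := ler_norm C; have := normr_ge0 C.
move: (cs_norm_ge0 (u (maxn N1 N2) - a)) (cs_norm_ge0 (v (maxn N1 N2) - b)); nra.
Qed.

Lemma eq_cs_cvg (B D : cstar_algebra R) u (v : nat -> B) a b (x y : D) (C : R) :
  cs_cvg u a -> cs_cvg v b ->
  (forall n, cs_norm (x - y) <= C * (cs_norm (u n - a) + cs_norm (v n - b))) -> x = y.
Proof.
move=> cu cv xy_le; apply/eqP; rewrite -subr_eq0; apply/eqP/cs_norm_le0.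
by apply: ler_cs_cvg cu cv _ => n; rewrite add0r.
Qed.

End Convergence.

Lemma nondecreasing_bounded_cauchy (R : realType) (r : nat -> R) (M : R) :
  (forall n, r n <= r n.+1) -> (forall n, r n <= M) ->
  forall e, 0 < e -> exists N, forall m n, (N <= n)%N -> (n <= m)%N -> r m - r n < e.
Proof.
move=> r_incr r_le e e_gt0.
have r_mono n m : (n <= m)%N -> r n <= r m.
  move=> /subnK <-; elim: (m - n)%N => [|k IH]; first by rewrite add0n.
  by rewrite addSn (le_trans IH).
pose E : set R := fun x => exists n, x = r n.
have supE : has_sup E by split; [exists (r 0%N); exists 0%N | exists M => _ [n ->]].
have [_ [N ->] near_sup] := sup_adherent e_gt0 supE.
exists N => m n Nn nm; have : r m <= sup E by apply: sup_upper_bound => //; exists m.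
by have := r_mono _ _ Nn; lra.
Qed.

Lemma subr_mul_self (Rg : pzRingType) (x y : Rg) : x * x - y * y = (x - y) * x + y * (x - y).
Proof. by rewrite mulrBl mulrBr addrA subrK. Qed.

Section Subalgebra.
Variables (R : realType) (A : cstar_algebra R) (S : A -> Prop).
Hypothesis S_subalg : is_cstar_subalg S.

Lemma subalg1 : S 1. Proof. by case: S_subalg. Qed.
Lemma subalgD x y : S x -> S y -> S (x + y). Proof. by case: S_subalg => _ + _ _ _; apply. Qed.
Lemma subalgZ c x : S x -> S (c *: x). Proof. by case: S_subalg => _ _ + _ _; apply. Qed.
Lemma subalgM x y : S x -> S y -> S (x * y). Proof. by case: S_subalg => _ _ _ + _; apply. Qed.
Lemma subalg_star x : S x -> S (cs_star x). Proof. by case: S_subalg => _ _ _ _ [+ _]; apply. Qed.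

Lemma subalg_lim u l : (forall n, S (u n)) -> cs_cvg u l -> S l.
Proof. by case: S_subalg => _ _ _ _ [_]; apply. Qed.

Lemma subalg0 : S 0. Proof. by rewrite -(scale0r 1); apply/subalgZ/subalg1. Qed.
Lemma subalgN x : S x -> S (- x). Proof. by rewrite -scaleN1r; apply: subalgZ. Qed.
Lemma subalgB x y : S x -> S y -> S (x - y). Proof. by move=> Sx /subalgN; apply: subalgD. Qed.

End Subalgebra.

Lemma subalgT (R : realType) (A : cstar_algebra R) : is_cstar_subalg (fun _ : A => True).
Proof. by []. Qed.

Section SqrtIteration.
Variables (R : realType) (A : cstar_algebra R).
Implicit Types (t w x y : A).

(* Picard iteration for [2 Y = t + Y^2], whose solution is [1 - sqrt (1 - t)]; the
   scalar iteration [sqrt_iter_bound], i.e. the case [t = 1], majorises it when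
   [cs_norm t <= 1]. *)
Fixpoint sqrt_iter t n : A :=
  if n is n'.+1 then half *: (t + sqrt_iter t n' * sqrt_iter t n') else 0.

Fixpoint sqrt_iter_bound n : R :=
  if n is n'.+1 then 2^-1 * (1 + sqrt_iter_bound n' * sqrt_iter_bound n') else 0.

Lemma sqrt_iter_bound_ge0_le1 n : 0 <= sqrt_iter_bound n <= 1.
Proof. by elim: n => [|n IH] /=; [rewrite lexx ler01 | move: IH; nra]. Qed.

Lemma sqrt_iter_bound_nondecr n : sqrt_iter_bound n <= sqrt_iter_bound n.+1.
Proof.
elim: n => [|n IH] /=; first by rewrite mulr0 addr0 mulr1 invr_ge0.
by have := sqrt_iter_bound_ge0_le1 n; have := sqrt_iter_bound_ge0_le1 n.+1 => /=; nra.
Qed.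

Lemma cs_norm_half x : cs_norm (half *: x) = 2^-1 * cs_norm x.
Proof. by rewrite cs_normRZ ger0_norm // invr_ge0. Qed.

Lemma sqrt_iter_norm t n : cs_norm t <= 1 ->
  cs_norm (sqrt_iter t n) <= sqrt_iter_bound n /\
  cs_norm (sqrt_iter t n.+1 - sqrt_iter t n) <= sqrt_iter_bound n.+1 - sqrt_iter_bound n.
Proof.
move=> t_le1; elim: n => [|n [IH1 IH2]].
  by rewrite /= !subr0 cs_norm0 !mulr0 !addr0 cs_norm_half; split=> //; nra.
have r_bnd := sqrt_iter_bound_ge0_le1 n.
set r0 := sqrt_iter_bound n in IH1 IH2 r_bnd *; set r1 := sqrt_iter_bound n.+1 in IH2 *.
set Y0 := sqrt_iter t n in IH1 IH2 *; set Y1 := sqrt_iter t n.+1 in IH2 *.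
have Y1_le : cs_norm Y1 <= r1.
  rewrite /Y1 /r1 /= cs_norm_half ler_wpM2l ?invr_ge0 //.
  apply: le_trans (cs_normD _ _) (lerD t_le1 (le_trans (cs_normM _ _) _)).
  by have := cs_norm_ge0 Y0; rewrite -/Y0 -/r0; nra.
split=> //.
have -> : sqrt_iter t n.+2 - Y1 = half *: ((Y1 - Y0) * Y1 + Y0 * (Y1 - Y0)).
  rewrite [in LHS]/= {2}/Y1 /= -scalerBr -/Y0 -/Y1; congr (_ *: _).
  by rewrite mulrBl mulrBr addrA subrK opprD addrACA subrr add0r.
have -> : sqrt_iter_bound n.+2 - r1 = 2^-1 * ((r1 - r0) * r1 + r0 * (r1 - r0)).
  have bE k : sqrt_iter_bound k.+1 = 2^-1 * (1 + sqrt_iter_bound k * sqrt_iter_bound k) by [].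
  by rewrite /r1 /r0 (bE n.+1) (bE n); field.
rewrite cs_norm_half ler_wpM2l ?invr_ge0 //.
apply: le_trans (cs_normD _ _) (lerD (le_trans (cs_normM _ _) _) (le_trans (cs_normM _ _) _)).
  by apply: ler_pM; rewrite ?cs_norm_ge0.
by apply: ler_pM; rewrite ?cs_norm_ge0.
Qed.

Lemma sqrt_iter_cauchy t : cs_norm t <= 1 -> cs_cauchy (sqrt_iter t).
Proof.
move=> t_le1 e e_gt0.
have [N Nr] := nondecreasing_bounded_cauchy sqrt_iter_bound_nondecr
  (fun n => proj2 (andP (sqrt_iter_bound_ge0_le1 n))) e_gt0.
have tele n k : cs_norm (sqrt_iter t (n + k) - sqrt_iter t n)
    <= sqrt_iter_bound (n + k) - sqrt_iter_bound n.
  elim: k => [|k IH]; first by rewrite addn0 !subrr cs_norm0.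
  apply: le_trans (cs_dist_triangle _ (sqrt_iter t (n + k)) _) _.
  by rewrite addnS; have [_] := sqrt_iter_norm (n + k) t_le1; move: IH; lra.
exists N.
suff ordered m n : (N <= n)%N -> (n <= m)%N -> cs_norm (sqrt_iter t m - sqrt_iter t n) < e.
  move=> m n Nm Nn; have [nm|/ltnW mn] := leqP n m; first exact: ordered.
  by rewrite cs_distC; apply: ordered.
by move=> Nn nm; apply: le_lt_trans (Nr m n Nn nm); rewrite -(subnKC nm) tele.
Qed.

Lemma sqrt_iter_in (S : A -> Prop) t n : is_cstar_subalg S -> S t -> S (sqrt_iter t n).
Proof.
move=> S_subalg St; elim: n => [|n IH] /=; first exact: subalg0.
exact/(subalgZ S_subalg)/(subalgD S_subalg St)/(subalgM S_subalg IH IH).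
Qed.

Lemma sqrt_iter_sa t n : selfadjoint t -> selfadjoint (sqrt_iter t n).
Proof.
rewrite /selfadjoint => sa_t; elim: n => [|n IH] /=.
  exact: cs_star0.
by rewrite cs_starRZ cs_starD cs_starM sa_t IH.
Qed.

Lemma sqrt_iter_comm t w n : GRing.comm w t -> GRing.comm w (sqrt_iter t n).
Proof.
move=> wt; elim: n => [|n IH] /=; first exact: commr0.
by rewrite /GRing.comm -scalerAr -scalerAl; congr (_ *: _); apply/commrD/commrM.
Qed.

Lemma exists_sqrt_fixpoint (S : A -> Prop) t : is_cstar_subalg S -> S t -> cs_norm t <= 1 ->
  exists Y, [/\ S Y, Y + Y = t + Y * Y, cs_norm Y <= 1,
    selfadjoint t -> selfadjoint Y & forall w, GRing.comm w t -> GRing.comm w Y].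
Proof.
move=> S_subalg St t_le1.
have [Y cvY] := cs_complete (sqrt_iter_cauchy t_le1); rewrite -/(cs_cvg _ Y) in cvY.
have iter_le1 n : cs_norm (sqrt_iter t n) <= 1.
  by have [+ _] := sqrt_iter_norm n t_le1; have /andP[_] := sqrt_iter_bound_ge0_le1 n; lra.
have Y_le1 : cs_norm Y <= 1.
  apply: (ler_cs_cvg (C := 1) cvY cvY) => n; rewrite mul1r.
  have := cs_dist_triangle Y (sqrt_iter t n) 0; rewrite !subr0 (cs_distC Y).
  by have := iter_le1 n; have := cs_norm_ge0 (sqrt_iter t n - Y); lra.
exists Y; split=> //.
- exact: subalg_lim (fun n => sqrt_iter_in n S_subalg St) cvY.
- apply: (eq_cs_cvg (C := 2) (cs_cvg_shift cvY) cvY) => n.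
  set Yn := sqrt_iter t n; set Yn1 := sqrt_iter t n.+1.
  have dbl : (Y - Yn1) + (Y - Yn1) = Y + Y - (t + Yn * Yn).
    by rewrite addrACA -opprD /Yn1 /= scale_half_add.
  have -> : Y + Y - (t + Y * Y) = (Y - Yn1) + (Y - Yn1) + ((Yn - Y) * Yn + Y * (Yn - Y)).
    by rewrite -subr_mul_self dbl -[RHS]addrA; congr (_ + _); rewrite !opprD addrA subrK.
  apply: le_trans (cs_normD _ _) _.
  have := cs_normD (Y - Yn1) (Y - Yn1); rewrite (cs_distC Y).
  have := le_trans (cs_normD _ _) (lerD (cs_normM (Yn - Y) Yn) (cs_normM Y (Yn - Y))).
  by have := iter_le1 n; have := cs_norm_ge0 (Yn - Y); have := cs_norm_ge0 Y; nra.
- move=> sa_t; apply: (eq_cs_cvg (C := 1) cvY cvY) => n.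
  have -> : cs_star Y - Y = cs_star (Y - sqrt_iter t n) + (sqrt_iter t n - Y).
    by rewrite cs_starB sqrt_iter_sa // addrA subrK.
  by apply: le_trans (cs_normD _ _) _; rewrite cs_norm_star (cs_distC Y); lra.
- move=> w wt; apply: (eq_cs_cvg (C := cs_norm w) cvY cvY) => n.
  have -> : w * Y - Y * w = w * (Y - sqrt_iter t n) + (sqrt_iter t n - Y) * w.
    by rewrite mulrBr mulrBl (sqrt_iter_comm n wt) addrA subrK.
  apply: le_trans (cs_normD _ _) _.
  have := cs_normM w (Y - sqrt_iter t n); rewrite (cs_distC Y).
  have := cs_normM (sqrt_iter t n - Y) w.
  by have := cs_norm_ge0 w; have := cs_norm_ge0 (sqrt_iter t n - Y); nra.
Qed.

End SqrtIteration.

Section SquareRoots.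
Variables (R : realType) (A : cstar_algebra R).
Implicit Types (b k t w x y : A).

(* With [z = b + i k], [z^* z = b^2 + k^2] and [b = (z + z^* ) / 2]. *)
Lemma sa_norm_sqr_le b k (m : R) : selfadjoint b -> selfadjoint k -> GRing.comm b k ->
  b * b + k * k = m%:C *: 1 -> 0 <= m -> cs_norm b ^+ 2 <= m.
Proof.
move=> sa_b sa_k bk sum_m m_ge0; set z := b + 'i *: k.
have z_star : cs_star z = b - 'i *: k.
  rewrite cs_starD cs_starZ sa_b sa_k -scaleNr.
  by congr (_ + _ *: _); rewrite /Num.conj /=; simpc.
have z_le : cs_norm z ^+ 2 <= m.
  have zz : cs_star z * z = b * b + k * k.
    have ii : ('i : R[i]) * 'i = -1 by rewrite -expr2 sqr_i.
    rewrite z_star mulrDr !mulrBl -!scalerAr -!scalerAl scalerA ii bk scaleN1r.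
    by rewrite opprK addrA subrK.
  rewrite -cs_cstar zz sum_m cs_normRZ ger0_norm //.
  by have := cs_norm1 A; have := cs_norm_ge0 (1 : A); nra.
have b_le : cs_norm b <= cs_norm z.
  have -> : b = half *: (z + cs_star z).
    by rewrite z_star addrACA subrr addr0 scalerDr scale_half_add.
  by rewrite cs_norm_half; have := cs_normD z (cs_star z); rewrite cs_norm_star; lra.
by move: z_le; have := cs_norm_ge0 b; nra.
Qed.

Lemma exists_sa_sqrt (S : A -> Prop) t : is_cstar_subalg S -> S t -> selfadjoint t ->
  cs_norm (1 - t) <= 1 ->
  exists k, [/\ S k, selfadjoint k, k * k = t & forall w, GRing.comm w t -> GRing.comm w k].
Proof.
move=> S_subalg St sa_t t_le.
have S1t := subalgB S_subalg (subalg1 S_subalg) St.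
have [Y [SY YE _ sa_Y Y_comm]] := exists_sqrt_fixpoint S_subalg S1t t_le.
exists (1 - Y); split.
- exact: (subalgB S_subalg (subalg1 S_subalg) SY).
- by rewrite /selfadjoint cs_starB cs_star1 sa_Y // /selfadjoint cs_starB cs_star1 sa_t.
- have -> : t = 1 - (Y + Y) + Y * Y by rewrite YE opprD addrA subrK subKr.
  by rewrite mulrBl mul1r mulrBr mulr1 opprB opprD !addrA addrAC.
- by move=> w wt; apply/commrB/Y_comm/commrB; [exact: commr1 | exact: commr1 | exact: wt].
Qed.

Lemma exists_sa_complement (S : A -> Prop) x : is_cstar_subalg S -> S x -> selfadjoint x ->
  cs_norm x <= 1 ->
  exists k, [/\ S k, selfadjoint k, x * x + k * k = 1 & GRing.comm x k].
Proof.
move=> S_subalg Sx sa_x x_le1.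
have S_t := subalgB S_subalg (subalg1 S_subalg) (subalgM S_subalg Sx Sx).
have sa_t : selfadjoint (1 - x * x) by rewrite /selfadjoint cs_starB cs_star1 cs_starM sa_x.
have t_le : cs_norm (1 - (1 - x * x)) <= 1.
  by rewrite opprB addrC subrK cs_norm_sa_sqr //; have := cs_norm_ge0 x; nra.
have [k [Sk sa_k kk k_comm]] := exists_sa_sqrt S_subalg S_t sa_t t_le.
exists k; split=> //; first by rewrite kk addrC subrK.
by apply: k_comm; apply/commrB/commrM; [exact: commr1 | exact: commr_refl | exact: commr_refl].
Qed.

Lemma cs_norm_one_sub_sqr_le1 x : selfadjoint x -> cs_norm x <= 1 -> cs_norm (1 - x * x) <= 1.
Proof.
move=> sa_x x_le1.
have [k [_ sa_k xk_sum xk]] := exists_sa_complement (subalgT A) I sa_x x_le1.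
have -> : 1 - x * x = k * k by rewrite -xk_sum addrAC subrr add0r.
rewrite cs_norm_sa_sqr //; apply: (sa_norm_sqr_le sa_k sa_x (commr_sym xk)) ler01.
by rewrite addrC xk_sum scale1r.
Qed.

Lemma cs_norm_add_self x : cs_norm (x + x) = 2 * cs_norm x.
Proof.
have := cs_norm_half (x + x); rewrite scalerDr scale_half_add => ->.
by rewrite mulrA mulfV ?mul1r // pnatr_eq0.
Qed.

Lemma half_sqr_fixpoint_unique t Y1 Y2 : Y1 + Y1 = t + Y1 * Y1 -> Y2 + Y2 = t + Y2 * Y2 ->
  cs_norm Y1 <= 1 -> cs_norm Y2 < 1 -> Y1 = Y2.
Proof.
move=> Y1E Y2E Y1_le Y2_lt; apply/eqP; rewrite -subr_eq0; apply/eqP/cs_norm_le0.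
have DD : (Y1 - Y2) + (Y1 - Y2) = (Y1 - Y2) * Y1 + Y2 * (Y1 - Y2).
  by rewrite -subr_mul_self addrACA -opprD Y1E Y2E opprD addrACA subrr add0r.
have := le_trans (cs_normD _ _) (lerD (cs_normM (Y1 - Y2) Y1) (cs_normM Y2 (Y1 - Y2))).
rewrite -DD cs_norm_add_self.
by have := cs_norm_ge0 (Y1 - Y2); have := cs_norm_ge0 Y2; nra.
Qed.

End SquareRoots.

Section ShiftedSquares.
Variables (R : realType) (A : cstar_algebra R).
Implicit Types (x : A) (d : R).

Definition half_sqr_sub x d : A := half *: (x * x - d%:C *: 1).

Lemma half_sqr_sub_sa x d : selfadjoint x -> selfadjoint (half_sqr_sub x d).
Proof.
by move=> sa_x; rewrite /selfadjoint cs_starRZ cs_starB cs_starRZ cs_starM sa_x cs_star1.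
Qed.

Lemma cs_norm_half_sqr_sub_le1 x d : cs_norm x <= 1 -> 0 <= d <= 1 ->
  cs_norm (half_sqr_sub x d) <= 1.
Proof.
move=> x_le1 /andP[d_ge0 d_le1]; rewrite cs_norm_half.
have := le_trans (cs_normD _ _) (lerD (cs_normM x x) (lexx (cs_norm (- (d%:C *: (1 : A)))))).
rewrite cs_normN cs_normRZ ger0_norm //.
by have := cs_norm1 A; have := cs_norm_ge0 (1 : A); have := cs_norm_ge0 x; nra.
Qed.

Lemma cs_norm_one_add_half_sqr_sub_lt1 x d : cs_norm x ^+ 2 < d -> d <= 2 ->
  cs_norm (1 + half_sqr_sub x d) < 1.
Proof.
move=> x_lt d_le2.
have -> : 1 + half_sqr_sub x d = (1 - 2^-1 * d)%:C *: 1 + half *: (x * x).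
  rewrite /half_sqr_sub scalerBr scalerA -rmorphM rmorphB rmorph1 scalerBl scale1r.
  by rewrite addrCA addrC.
apply: le_lt_trans (cs_normD _ _) _; rewrite cs_normRZ cs_norm_half ger0_norm; last by lra.
have := cs_normM x x; have := cs_norm1 A; have := cs_norm_ge0 (1 : A).
by rewrite expr2 in x_lt; nra.
Qed.

(* If [1 + (x^2 - d)/2] lies in the unit ball then [(d - x^2)/2] is a square [k^2], so
   [x^2 + (sqrt 2 k)^2 = d]. *)
Lemma sa_norm_sqr_le_of_half_sqr_sub x d : selfadjoint x -> 0 <= d ->
  cs_norm (1 + half_sqr_sub x d) <= 1 -> cs_norm x ^+ 2 <= d.
Proof.
move=> sa_x d_ge0 le1; set y := half_sqr_sub x d.
have sa_y : selfadjoint (- y) by rewrite /selfadjoint cs_starN half_sqr_sub_sa.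
have y_le : cs_norm (1 - - y) <= 1 by rewrite opprK.
have [k [_ sa_k kk k_comm]] := exists_sa_sqrt (subalgT A) I sa_y y_le.
have xy : GRing.comm x (- y).
  apply/commrN; rewrite /GRing.comm -scalerAr -scalerAl; congr (_ *: _).
  by apply/commrB; [exact: commrM | rewrite /GRing.comm -scalerAr -scalerAl commr1].
set k2 := (Num.sqrt (2 : R))%:C *: k.
apply: (sa_norm_sqr_le (k := k2)) => //.
- by rewrite /selfadjoint cs_starRZ sa_k.
- by rewrite /GRing.comm -scalerAr -scalerAl (k_comm _ xy).
have sqrt2 : Num.sqrt (2 : R) * Num.sqrt 2 = 2 by rewrite -expr2 sqr_sqrtr // ler0n.
rewrite /k2 -scalerAr -scalerAl scalerA -rmorphM sqrt2 kk /y /half_sqr_sub.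
rewrite scalerN scalerA -rmorphM mulfV ?pnatr_eq0 // rmorph1 scale1r.
by rewrite opprB addrC subrK.
Qed.

End ShiftedSquares.

Definition star_morph_on (R : realType) (A B : cstar_algebra R) (S : A -> Prop) (f : A -> B) :=
  [/\ forall x y, S x -> S y -> f (x + y) = f x + f y,
      forall (c : R[i]) x, S x -> f (c *: x) = c *: f x,
      forall x y, S x -> S y -> f (x * y) = f x * f y,
      forall x, S x -> f (cs_star x) = cs_star (f x)
    & f 1 = 1].

Definition isometric_on (R : realType) (A B : cstar_algebra R) (S : A -> Prop) (f : A -> B) :=
  forall x, S x -> cs_norm (f x) = cs_norm x.

Section MorphOn.
Variables (R : realType) (A B : cstar_algebra R) (S : A -> Prop) (f : A -> B).
Hypotheses (S_subalg : is_cstar_subalg S) (f_morph : star_morph_on S f).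
Implicit Types (x y : A).

Lemma morph_onD x y : S x -> S y -> f (x + y) = f x + f y.
Proof. by case: f_morph => + _ _ _ _; apply. Qed.
Lemma morph_onZ c x : S x -> f (c *: x) = c *: f x.
Proof. by case: f_morph => _ + _ _ _; apply. Qed.
Lemma morph_onM x y : S x -> S y -> f (x * y) = f x * f y.
Proof. by case: f_morph => _ _ + _ _; apply. Qed.
Lemma morph_on_star x : S x -> f (cs_star x) = cs_star (f x).
Proof. by case: f_morph => _ _ _ + _; apply. Qed.
Lemma morph_on1 : f 1 = 1.
Proof. by case: f_morph. Qed.
Lemma morph_on0 : f 0 = 0.
Proof. by rewrite -(scale0r (1 : A)) morph_onZ ?scale0r //; exact: subalg1. Qed.
Lemma morph_onN x : S x -> f (- x) = - f x.
Proof. by move=> Sx; rewrite -scaleN1r morph_onZ // scaleN1r. Qed.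
Lemma morph_onB x y : S x -> S y -> f (x - y) = f x - f y.
Proof. by move=> Sx Sy; rewrite morph_onD ?morph_onN //; exact: subalgN. Qed.

Lemma morph_on_sa x : S x -> selfadjoint x -> selfadjoint (f x).
Proof. by move=> Sx sa_x; rewrite /selfadjoint -morph_on_star // sa_x. Qed.

Lemma morph_on_half_sqr_sub x d : S x -> f (half_sqr_sub x d) = half_sqr_sub (f x) d.
Proof.
move=> Sx; have S1 := subalg1 S_subalg; have Sxx := subalgM S_subalg Sx Sx.
have Sd : S (d%:C *: 1) := subalgZ S_subalg _ S1.
rewrite /half_sqr_sub morph_onZ ?morph_onB ?morph_onZ ?morph_onM ?morph_on1 //.
exact: (subalgB S_subalg Sxx Sd).
Qed.

(* [x] and [k = sqrt (1 - x^2)] are mapped to commuting self-adjoint elements whose squares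
   add up to [1]. *)
Lemma morph_on_norm_le1_sa x : S x -> selfadjoint x -> cs_norm x <= 1 -> cs_norm (f x) <= 1.
Proof.
move=> Sx sa_x x_le1.
have [k [Sk sa_k xk_sum xk]] := exists_sa_complement S_subalg Sx sa_x x_le1.
have fxk_sum : f x * f x + f k * f k = 1%:C *: 1.
  by rewrite scale1r -!morph_onM // -morph_onD ?xk_sum ?morph_on1 //; apply: subalgM.
have fxk : GRing.comm (f x) (f k) by rewrite /GRing.comm -!morph_onM // xk.
have := sa_norm_sqr_le (morph_on_sa Sx sa_x) (morph_on_sa Sk sa_k) fxk fxk_sum ler01.
by have := cs_norm_ge0 (f x); nra.
Qed.

Lemma morph_on_norm_le_sa x : S x -> selfadjoint x -> cs_norm (f x) <= cs_norm x.
Proof.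
move=> Sx sa_x; have [/cs_norm_eq0 ->|x_neq0] := eqVneq (cs_norm x) 0.
  by rewrite morph_on0 !cs_norm0.
have x_gt0 : 0 < cs_norm x by rewrite lt0r x_neq0 cs_norm_ge0.
have := @morph_on_norm_le1_sa ((cs_norm x)^-1%:C *: x) (subalgZ S_subalg _ Sx).
rewrite cs_norm_normalize // /selfadjoint cs_starRZ sa_x morph_onZ // cs_normRZ.
rewrite gtr0_norm ?invr_gt0 // => /(_ erefl (lexx _)).
by rewrite ler_pdivrMl // mulr1.
Qed.

Lemma morph_on_norm_le x : S x -> cs_norm (f x) <= cs_norm x.
Proof.
move=> Sx; have Sxx := subalgM S_subalg (subalg_star S_subalg Sx) Sx.
have := morph_on_norm_le_sa Sxx; rewrite /selfadjoint cs_starM cs_starK => /(_ erefl).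
rewrite morph_onM ?morph_on_star ?cs_cstar //; last exact: subalg_star.
by have := cs_norm_ge0 (f x); have := cs_norm_ge0 x; nra.
Qed.

Hypothesis f_inj : forall x y, S x -> S y -> f x = f y -> x = y.

(* The fixed point [Y = 1 - sqrt (1 - x^2)] of [2 Y = (1 - x^2) + Y^2] is sent to a fixed
   point of the image equation, which [1 + f x] also solves; by uniqueness in the open unit
   ball and injectivity, [Y = 1 + x]. *)
Lemma morph_on_norm_one_add_le1 x : S x -> selfadjoint x -> cs_norm x <= 1 ->
  cs_norm (1 + f x) < 1 -> cs_norm (1 + x) <= 1.
Proof.
move=> Sx sa_x x_le1 fx_lt1.
have S1 := subalg1 S_subalg; have Sxx := subalgM S_subalg Sx Sx.
have St := subalgB S_subalg S1 Sxx.
have [Y [SY YE Y_le1 _ _]] :=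
  exists_sqrt_fixpoint S_subalg St (cs_norm_one_sub_sqr_le1 sa_x x_le1).
have fYE : f Y + f Y = f (1 - x * x) + f Y * f Y.
  by rewrite -morph_onM // -!morph_onD // ?YE //; apply: subalgM.
have fxE : (1 + f x) + (1 + f x) = f (1 - x * x) + (1 + f x) * (1 + f x).
  rewrite morph_onB // morph_on1 morph_onM // mulrDl !mulrDr mul1r mulr1 mul1r.
  by rewrite [RHS]addrCA; congr (_ + _); rewrite addrCA subrK addrC.
have fY_le1 : cs_norm (f Y) <= 1 := le_trans (morph_on_norm_le SY) Y_le1.
have fY : f Y = f (1 + x).
  by rewrite morph_onD // morph_on1; apply: half_sqr_fixpoint_unique fYE fxE fY_le1 fx_lt1.
by rewrite -(f_inj SY (subalgD S_subalg S1 Sx) fY).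
Qed.

(* Were [‖f x1‖ = c < 1 = ‖x1‖], take [d = (1 + c^2)/2]: then [1 + (f x1^2 - d)/2] is in the
   open unit ball, so [1 + (x1^2 - d)/2] is in the closed one, forcing [‖x1‖^2 <= d < 1]. *)
Lemma morph_on_norm_ge_sa x : S x -> selfadjoint x -> cs_norm x <= cs_norm (f x).
Proof.
move=> Sx sa_x; have [//|fx_lt] := leP (cs_norm x) (cs_norm (f x)); exfalso.
have x_gt0 : 0 < cs_norm x by apply: le_lt_trans fx_lt; exact: cs_norm_ge0.
set x1 := (cs_norm x)^-1%:C *: x.
have Sx1 : S x1 := subalgZ S_subalg _ Sx.
have sa_x1 : selfadjoint x1 by rewrite /selfadjoint cs_starRZ sa_x.
have x1_eq1 : cs_norm x1 = 1 := cs_norm_normalize x_gt0.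
set c := cs_norm (f x1); have c_ge0 : 0 <= c := cs_norm_ge0 _.
have c_lt1 : c < 1.
  by rewrite /c morph_onZ // cs_normRZ gtr0_norm ?invr_gt0 // ltr_pdivrMl // mulr1.
set d := 2^-1 * (1 + c ^+ 2).
have Sx2 : S (half_sqr_sub x1 d).
  apply: (subalgZ S_subalg); apply: (subalgB S_subalg (subalgM S_subalg Sx1 Sx1)).
  exact: (subalgZ S_subalg _ (subalg1 S_subalg)).
have x2_le1 : cs_norm (half_sqr_sub x1 d) <= 1.
  by apply: cs_norm_half_sqr_sub_le1; rewrite ?x1_eq1 // /d; apply/andP; split; nra.
have fx2_lt1 : cs_norm (1 + f (half_sqr_sub x1 d)) < 1.
  rewrite morph_on_half_sqr_sub //.
  by apply: cs_norm_one_add_half_sqr_sub_lt1; rewrite -/c /d; nra.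
have := morph_on_norm_one_add_le1 Sx2 (half_sqr_sub_sa d sa_x1) x2_le1 fx2_lt1.
move=> /(sa_norm_sqr_le_of_half_sqr_sub sa_x1); rewrite x1_eq1 /d; nra.
Qed.

Lemma morph_on_isometric : isometric_on S f.
Proof.
move=> x Sx; have Sxx := subalgM S_subalg (subalg_star S_subalg Sx) Sx.
have := morph_on_norm_ge_sa Sxx; rewrite /selfadjoint cs_starM cs_starK => /(_ erefl).
rewrite morph_onM ?morph_on_star ?cs_cstar //; last exact: subalg_star.
have := morph_on_norm_le Sx; have := cs_norm_ge0 (f x); have := cs_norm_ge0 x.
by move=> *; apply/eqP; rewrite eq_le; apply/andP; split; nra.
Qed.

End MorphOn.

Section MorphOnCalculus.
Variables (R : realType) (A B C : cstar_algebra R).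

Lemma star_morph_onW (S : A -> Prop) (f : A -> B) : star_morph f -> star_morph_on S f.
Proof.
by case=> fD fZ fM f_star f1; split=> *; [apply: fD | apply: fZ | apply: fM | apply: f_star |].
Qed.

Lemma star_iso_on_morph (S : A -> Prop) (T : B -> Prop) (f : A -> B) :
  is_cstar_subalg S -> is_cstar_subalg T -> star_iso_on S T f -> star_morph_on S f.
Proof.
move=> S_subalg T_subalg [fD fZ fM f_star [_ _ f_onto]]; split=> //.
have [e Se fe] := f_onto 1 (subalg1 T_subalg).
by have := fM 1 e (subalg1 S_subalg) Se; rewrite mul1r fe mulr1.
Qed.

Lemma star_morph_on_comp (S : A -> Prop) (T : B -> Prop) (f : A -> B) (g : B -> C) :
  (forall x, S x -> T (f x)) -> star_morph_on S f -> star_morph_on T g ->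
  star_morph_on S (fun x => g (f x)).
Proof.
move=> ST f_morph g_morph; split=> [x y Sx Sy|c x Sx|x y Sx Sy|x Sx|].
- by rewrite (morph_onD f_morph) // (morph_onD g_morph) //; apply: ST.
- by rewrite (morph_onZ f_morph) // (morph_onZ g_morph) //; apply: ST.
- by rewrite (morph_onM f_morph) // (morph_onM g_morph) //; apply: ST.
- by rewrite (morph_on_star f_morph) // (morph_on_star g_morph) //; apply: ST.
- by rewrite (morph_on1 f_morph) (morph_on1 g_morph).
Qed.

Lemma isometric_on_comp (S : A -> Prop) (T : B -> Prop) (f : A -> B) (g : B -> C) :
  (forall x, S x -> T (f x)) -> isometric_on S f -> isometric_on T g ->
  isometric_on S (fun x => g (f x)).
Proof. by move=> ST f_iso g_iso x Sx; rewrite g_iso ?f_iso //; apply: ST. Qed.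

Lemma isometric_on_dist (S : A -> Prop) (f : A -> B) :
  is_cstar_subalg S -> star_morph_on S f -> isometric_on S f ->
  forall x y, S x -> S y -> cs_norm (f x - f y) = cs_norm (x - y).
Proof.
move=> S_subalg f_morph f_iso x y Sx Sy.
by rewrite -(morph_onB S_subalg f_morph) // f_iso //; apply: subalgB.
Qed.

Lemma isometric_on_inj (S : A -> Prop) (f : A -> B) :
  is_cstar_subalg S -> star_morph_on S f -> isometric_on S f ->
  forall x y, S x -> S y -> f x = f y -> x = y.
Proof.
move=> S_subalg f_morph f_iso x y Sx Sy fxy; apply/eqP; rewrite -subr_eq0; apply/eqP.
apply: cs_norm_eq0.
by rewrite -(isometric_on_dist S_subalg f_morph f_iso Sx Sy) fxy subrr cs_norm0.
Qed.

Lemma star_morph_isometric (S : A -> Prop) (f : A -> B) : star_morph f -> injective f ->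
  isometric_on S f.
Proof.
move=> /(star_morph_onW (fun _ => True)) f_morph f_inj x _.
by apply: (morph_on_isometric (subalgT A) f_morph) => // y z _ _ /f_inj.
Qed.

Lemma star_iso_on_isometric (S : A -> Prop) (T : B -> Prop) (f : A -> B) :
  is_cstar_subalg S -> is_cstar_subalg T -> star_iso_on S T f -> isometric_on S f.
Proof.
move=> S_subalg T_subalg f_iso.
apply: (morph_on_isometric S_subalg (star_iso_on_morph S_subalg T_subalg f_iso)).
by case: f_iso => _ _ _ _ [].
Qed.

End MorphOnCalculus.

Section Generated.
Variables (R : realType) (A B : cstar_algebra R).

Lemma cstar_gen_subalg (D : cstar_algebra R) (X : D -> Prop) : is_cstar_subalg (cstar_gen X).
Proof.
split=> [S [] //|x y Sx Sy S S_subalg XS|c x Sx S S_subalg XS|x y Sx Sy S S_subalg XS|].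
- exact: (subalgD S_subalg (Sx S S_subalg XS) (Sy S S_subalg XS)).
- exact: (subalgZ S_subalg _ (Sx S S_subalg XS)).
- exact: (subalgM S_subalg (Sx S S_subalg XS) (Sy S S_subalg XS)).
split=> [x Sx S S_subalg XS|u l Su cvu S S_subalg XS].
- exact: (subalg_star S_subalg (Sx S S_subalg XS)).
- exact: (subalg_lim S_subalg (fun n => Su n S S_subalg XS) cvu).
Qed.

Lemma cstar_gen_incl (D : cstar_algebra R) (X : D -> Prop) x : X x -> cstar_gen X x.
Proof. by move=> Xx S _; apply. Qed.

Lemma cstar_gen_min (X T : A -> Prop) :
  is_cstar_subalg T -> (forall x, X x -> T x) -> forall x, cstar_gen X x -> T x.
Proof. by move=> T_subalg XT x; apply. Qed.

Lemma cstar_subalg_preim (T : B -> Prop) (f : A -> B) :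
  star_morph f -> is_cstar_subalg T -> is_cstar_subalg (fun x => T (f x)).
Proof.
move=> /(star_morph_onW (fun _ => True)) f_morph T_subalg; have U := subalgT A.
split=> [|x y|c x|x y|].
- by rewrite (morph_on1 f_morph); apply: subalg1.
- by rewrite (morph_onD f_morph) //; apply: subalgD.
- by rewrite (morph_onZ f_morph) //; apply: subalgZ.
- by rewrite (morph_onM f_morph) //; apply: subalgM.
split=> [x|u l Tu cvu].
- by rewrite (morph_on_star f_morph) //; apply: subalg_star.
apply: (subalg_lim (u := fun n => f (u n)) T_subalg Tu) => e /cvu[N Nu]; exists N => n /Nu.
by rewrite -(morph_onB U f_morph) //; apply: le_lt_trans (morph_on_norm_le U f_morph _).
Qed.

Lemma cstar_gen_map (X : A -> Prop) (Y : B -> Prop) (f : A -> B) :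
  star_morph f -> (forall x, X x -> Y (f x)) ->
  forall x, cstar_gen X x -> cstar_gen Y (f x).
Proof.
move=> f_morph XY x; apply: (cstar_gen_min (T := fun x => cstar_gen Y (f x))).
  exact: (cstar_subalg_preim f_morph (cstar_gen_subalg Y)).
by move=> y /XY /cstar_gen_incl.
Qed.

End Generated.

Section Lifting.
Variables (R : realType) (A1 A2 C : cstar_algebra R).
Variables (S1 : A1 -> Prop) (S2 : A2 -> Prop) (P : A1 -> C) (Q : A2 -> C).
Hypotheses (S1_subalg : is_cstar_subalg S1) (S2_subalg : is_cstar_subalg S2).
Hypotheses (P_morph : star_morph_on S1 P) (Q_morph : star_morph_on S2 Q).
Hypotheses (P_iso : isometric_on S1 P) (Q_iso : isometric_on S2 Q).

Definition lifts x := exists2 y, S2 y & Q y = P x.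

Lemma lifts_lim u l : (forall n, S1 (u n)) -> S1 l -> cs_cvg u l ->
  (forall n, lifts (u n)) -> lifts l.
Proof.
move=> S1u S1l cvu u_lifts.
have [y yP] : exists y : nat -> A2, forall n, S2 (y n) /\ Q (y n) = P (u n).
  apply: (choice (fun n y => S2 y /\ Q y = P (u n))) => n.
  by have [y ? ?] := u_lifts n; exists y.
have S2y n : S2 (y n) by case: (yP n).
have y_dist m n : cs_norm (y m - y n) = cs_norm (u m - u n).
  rewrite -(isometric_on_dist S2_subalg Q_morph Q_iso (S2y m) (S2y n)).
  by rewrite (proj2 (yP m)) (proj2 (yP n)) (isometric_on_dist S1_subalg P_morph P_iso).
have [yl cvy] : exists yl, cs_cvg y yl.
  apply: cs_complete => e /(cs_cvg_cauchy cvu)[N Nu].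
  by exists N => m n Nm Nn; rewrite y_dist; apply: Nu.
have S2yl : S2 yl := subalg_lim S2_subalg S2y cvy.
exists yl => //; apply: (eq_cs_cvg (C := 1) cvy cvu) => n; rewrite mul1r.
apply: le_trans (cs_dist_triangle _ (P (u n)) _) _; rewrite -{1}(proj2 (yP n)).
rewrite (isometric_on_dist S2_subalg Q_morph Q_iso) //.
by rewrite (isometric_on_dist S1_subalg P_morph P_iso) // (cs_distC yl).
Qed.

Lemma lifts_subalg : is_cstar_subalg (fun x => S1 x /\ lifts x).
Proof.
have S11 := subalg1 S1_subalg; have S21 := subalg1 S2_subalg.
split=> [|x1 x2 [S1x1 [y1 S2y1 y1E]] [S1x2 [y2 S2y2 y2E]]|c x1 [S1x1 [y1 S2y1 y1E]]|
          x1 x2 [S1x1 [y1 S2y1 y1E]] [S1x2 [y2 S2y2 y2E]]|].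
- by split=> //; exists 1; rewrite ?(morph_on1 P_morph) ?(morph_on1 Q_morph).
- split; first exact: (subalgD S1_subalg).
  exists (y1 + y2); first exact: (subalgD S2_subalg).
  by rewrite (morph_onD Q_morph) // (morph_onD P_morph) // y1E y2E.
- split; first exact: (subalgZ S1_subalg).
  exists (c *: y1); first exact: (subalgZ S2_subalg).
  by rewrite (morph_onZ Q_morph) // (morph_onZ P_morph) // y1E.
- split; first exact: (subalgM S1_subalg).
  exists (y1 * y2); first exact: (subalgM S2_subalg).
  by rewrite (morph_onM Q_morph) // (morph_onM P_morph) // y1E y2E.
split=> [x1 [S1x1 [y1 S2y1 y1E]]|u l ul cvu].
- split; first exact: (subalg_star S1_subalg).
  exists (cs_star y1); first exact: (subalg_star S2_subalg).
  by rewrite (morph_on_star Q_morph) // (morph_on_star P_morph) // y1E.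
have S1l : S1 l by apply: (subalg_lim S1_subalg _ cvu) => n; case: (ul n).
by split=> //; apply: (lifts_lim _ S1l cvu) => n; case: (ul n).
Qed.

Lemma star_morph_on_factor (g : A1 -> A2) : (forall x, S1 x -> S2 (g x)) ->
  (forall x, S1 x -> Q (g x) = P x) -> star_morph_on S1 g.
Proof.
move=> gS gE; have Q_inj := isometric_on_inj S2_subalg Q_morph Q_iso.
split=> [x y S1x S1y|c x S1x|x y S1x S1y|x S1x|].
- have [S2gx S2gy] := (gS _ S1x, gS _ S1y).
  apply: (Q_inj _ _ (gS _ (subalgD S1_subalg S1x S1y)) (subalgD S2_subalg S2gx S2gy)).
  by rewrite (morph_onD Q_morph) // !gE ?(morph_onD P_morph) //; exact: (subalgD S1_subalg).
- have S2gx := gS _ S1x.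
  apply: (Q_inj _ _ (gS _ (subalgZ S1_subalg c S1x)) (subalgZ S2_subalg c S2gx)).
  by rewrite (morph_onZ Q_morph) // !gE ?(morph_onZ P_morph) //; exact: (subalgZ S1_subalg).
- have [S2gx S2gy] := (gS _ S1x, gS _ S1y).
  apply: (Q_inj _ _ (gS _ (subalgM S1_subalg S1x S1y)) (subalgM S2_subalg S2gx S2gy)).
  by rewrite (morph_onM Q_morph) // !gE ?(morph_onM P_morph) //; exact: (subalgM S1_subalg).
- have S2gx := gS _ S1x.
  apply: (Q_inj _ _ (gS _ (subalg_star S1_subalg S1x)) (subalg_star S2_subalg S2gx)).
  rewrite (morph_on_star Q_morph) // !gE ?(morph_on_star P_morph) //.
  exact: (subalg_star S1_subalg).
- have S11 := subalg1 S1_subalg.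
  apply: (Q_inj _ _ (gS _ S11) (subalg1 S2_subalg)).
  by rewrite gE // (morph_on1 P_morph) (morph_on1 Q_morph).
Qed.

Lemma star_iso_on_lift : (forall x, S1 x -> lifts x) ->
  (forall y, S2 y -> exists2 x, S1 x & P x = Q y) ->
  exists g, star_iso_on S1 S2 g /\ forall x, S1 x -> Q (g x) = P x.
Proof.
move=> S1_lifts S2_descends.
have Q_inj := isometric_on_inj S2_subalg Q_morph Q_iso.
have P_inj := isometric_on_inj S1_subalg P_morph P_iso.
have [g gP] : exists g : A1 -> A2, forall x, S1 x -> S2 (g x) /\ Q (g x) = P x.
  apply: (choice (fun x y => S1 x -> S2 y /\ Q y = P x)) => x.
  case: (classic (S1 x)) => [/S1_lifts[y S2y yE] | NS1x]; first by exists y.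
  by exists 0 => /NS1x.
have gS x (S1x : S1 x) := proj1 (gP x S1x); have gE x (S1x : S1 x) := proj2 (gP x S1x).
exists g; split=> //.
have [gD gZ gM g_star _] := star_morph_on_factor gS gE.
split=> //; split=> [//|x y S1x S1y gxy|y S2y].
  by apply: P_inj => //; rewrite -!gE // gxy.
have [x S1x xE] := S2_descends y S2y.
by exists x => //; apply: (Q_inj _ _ (gS _ S1x) S2y); rewrite gE.
Qed.

End Lifting.

Lemma cstar_gen_iso_lift (R : realType) (A1 A2 C : cstar_algebra R)
    (X1 : A1 -> Prop) (X2 : A2 -> Prop) (P : A1 -> C) (Q : A2 -> C) :
  star_morph_on (cstar_gen X1) P -> star_morph_on (cstar_gen X2) Q ->
  isometric_on (cstar_gen X1) P -> isometric_on (cstar_gen X2) Q ->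
  (forall x, X1 x -> lifts (cstar_gen X2) P Q x) ->
  (forall y, X2 y -> lifts (cstar_gen X1) Q P y) ->
  exists g, star_iso_on (cstar_gen X1) (cstar_gen X2) g /\
    forall x, cstar_gen X1 x -> Q (g x) = P x.
Proof.
move=> P_morph Q_morph P_iso Q_iso X1_lifts X2_lifts.
have [S1_subalg S2_subalg] := (cstar_gen_subalg X1, cstar_gen_subalg X2).
apply: (star_iso_on_lift S1_subalg S2_subalg P_morph Q_morph P_iso Q_iso).
- move=> x /(cstar_gen_min (lifts_subalg S1_subalg S2_subalg P_morph Q_morph P_iso Q_iso)).
  by case=> // y X1y; split; [exact: cstar_gen_incl | exact: X1_lifts].
- move=> y /(cstar_gen_min (lifts_subalg S2_subalg S1_subalg Q_morph P_morph Q_iso P_iso)).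
  by case=> // x X2x; split; [exact: cstar_gen_incl | exact: X2_lifts].
Qed.

Lemma loc_alg_net_mono (R : realType) (d : Order.disp_t) (K : porderType d)
    (A B : K -> cstar_algebra R) (j : forall a o : K, A a -> A o)
    (i : forall a o : K, B a -> B o) (psi : forall o : K, A o -> B o) (F : K -> Prop) (o : K) :
  net_mono j i psi -> (forall a, F a -> (a <= o)%O) ->
  forall x, loc_alg j F x -> loc_alg i F (psi o x).
Proof.
move=> [psi_morph psi_net] F_le; apply: cstar_gen_map (proj1 (psi_morph o)) _.
by move=> _ [a [x Fa ->]]; exists a; exists (psi a x); last exact: psi_net (F_le a Fa) x.
Qed.

Theorem lemma5p4 (R : realType) (d : Order.disp_t) (K : porderType d)
    (A B : K -> cstar_algebra R)
    (j : forall a o : K, A a -> A o) (i : forall a o : K, B a -> B o)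
    (psi : forall o : K, A o -> B o) :
  is_net j -> is_net i -> net_mono j i psi ->
  forall (F : K -> Prop) (ot o : K),
    (exists a, F a) ->
    (forall a, F a -> (a <= ot)%O /\ (a <= o)%O) ->
    cech_defined i F ot o -> cech_defined j F ot o.
Proof.
move=> _ _ psi_mono F ot o _ F_le [xi [xi_iso xi_gen]].
have [psi_morph psi_net] := psi_mono.
have [F_le_ot F_le_o] : (forall a, F a -> (a <= ot)%O) /\ (forall a, F a -> (a <= o)%O).
  by split=> a /F_le[].
have LB_subalg o' : is_cstar_subalg (loc_alg i F (o:=o')) := cstar_gen_subalg _.
have psi_loc := loc_alg_net_mono psi_mono F_le_o.
have psi_iso o' (S : A o' -> Prop) : isometric_on S (psi o').
  exact: star_morph_isometric (proj1 (psi_morph o')) (proj2 (psi_morph o')).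
have gen_eq a x : F a -> psi ot (j a ot x) = xi (psi o (j a o x)).
  by move=> Fa; rewrite psi_net ?F_le_ot // psi_net ?F_le_o // xi_gen.
have [zeta [zeta_iso zetaE]] : exists zeta,
    star_iso_on (loc_alg j F (o:=o)) (loc_alg j F (o:=ot)) zeta /\
    forall x, loc_alg j F x -> psi ot (zeta x) = xi (psi o x).
  apply: (cstar_gen_iso_lift
    (star_morph_on_comp psi_loc (star_morph_onW _ (proj1 (psi_morph o)))
      (star_iso_on_morph (LB_subalg o) (LB_subalg ot) xi_iso))
    (star_morph_onW _ (proj1 (psi_morph ot)))
    (isometric_on_comp psi_loc (psi_iso o _)
      (star_iso_on_isometric (LB_subalg o) (LB_subalg ot) xi_iso))
    (psi_iso ot _)) => _ [a [x Fa ->]].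
  + by exists (j a ot x); [apply: cstar_gen_incl; exists a; exists x | rewrite gen_eq].
  + by exists (j a o x); [apply: cstar_gen_incl; exists a; exists x | rewrite gen_eq].
exists zeta; split=> // a Fa x; apply: (proj2 (psi_morph ot)).
by rewrite zetaE ?gen_eq //; apply: cstar_gen_incl; exists a; exists x.
Qed.
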